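(* Let $m>n$ be positive integers. (a) For every $\lambda\in X$, $x(\lambda)$ lies in the $\mathfrak T_{iso}$-orbit $\mathcal O$ of $\Lambda_0$. (b) For every $k\in\mathbb Z$, $\Lambda_0+kn\,\mathbf m\in\mathcal O$, where $\mathbf m=(m,\dots,m|m,\dots,m)$.
   Context: $X$ is the set of partitions $\lambda=(\lambda_1\ge\dots\ge\lambda_n\ge0)$ with $\lambda_1\le m$; $\lambda'_j=\#\{i:\lambda_i\ge j\}$. For $\lambda\in X$, $x(\lambda)=(a_1,\dots,a_n|b_1,\dots,b_m)\in\mathbb Z^{n|m}$ with $a_i=m(n-i)+n\lambda_{n+1-i}$, $b_j=n(j-1)+m\lambda'_j$; $\Lambda_0=x(\emptyset)=(m(n-1),\dots,m,0|0,n,\dots,n(m-1))$. For $\alpha=\epsilon_i-\delta_j$: $\Pi_\alpha=\{a_i=b_j\}$, $\Pi_{-\alpha}=\{a_i-b_j=n-m\}$, $\tau_\alpha:\Pi_\alpha\to\Pi_{-\alpha}$ adds $n$ to $a_i$ and $m$ to $b_j$, $\tau_{-\alpha}=\tau_\alpha^{-1}$. $\mathcal O$ is the set of elements obtained from $\Lambda_0$ by finite sequences of maps $\tau_{\pm\alpha}$, each applied on its domain. *)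

From mathcomp Require Import all_boot all_order all_algebra.
Set Implicit Arguments. Unset Strict Implicit. Unset Printing Implicit Defensive.
Import Order.TTheory GRing.Theory Num.Theory.
Local Open Scope ring_scope.

(* Points of Z^{n|m}: (a_1..a_n | b_1..b_m), indices shifted to 0-based ordinals. *)
Definition pt (n m : nat) := ({ffun 'I_n -> int} * {ffun 'I_m -> int})%type.

(* X: partitions lambda_1 >= ... >= lambda_n >= 0 with lambda_1 <= m
   (lam i is lambda_{i+1}). *)
Definition inX (n m : nat) (lam : {ffun 'I_n -> nat}) : Prop :=
  (forall i j : 'I_n, (i <= j)%N -> (lam j <= lam i)%N) /\
  (forall i : 'I_n, (lam i <= m)%N).

Definition conjp (n : nat) (lam : {ffun 'I_n -> nat}) (j : nat) : nat :=
  #|[set i : 'I_n | (j <= lam i)%N]|.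

(* x(lambda): a_i = m(n-i) + n lambda_{n+1-i},  b_j = n(j-1) + m lambda'_j
   with 1-based i, j; here i, j are 0-based, so i+1, j+1 are the paper's indices. *)
Definition xlam (n m : nat) (lam : {ffun 'I_n -> nat}) : pt n m :=
  ([ffun i : 'I_n => ((m * (n - (i.+1)) + n * lam (rev_ord i))%N)%:Z],
   [ffun j : 'I_m => ((n * j + m * conjp lam j.+1)%N)%:Z]).

(* Lambda_0 = x(empty) = (m(n-1),...,m,0 | 0,n,...,n(m-1)) *)
Definition Lambda0 (n m : nat) : pt n m :=
  ([ffun i : 'I_n => ((m * (n - (i.+1)))%N)%:Z],
   [ffun j : 'I_m => ((n * j)%N)%:Z]).

(* tau_alpha for alpha = eps_i - delta_j: defined on a_i = b_j,
   adds n to a_i and m to b_j. *)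
Definition tau_plus (n m : nat) (i : 'I_n) (j : 'I_m) (x : pt n m) : pt n m :=
  ([ffun k => if k == i then x.1 k + n%:Z else x.1 k],
   [ffun l => if l == j then x.2 l + m%:Z else x.2 l]).

(* tau_{-alpha} = tau_alpha^{-1}: defined on a_i - b_j = n - m. *)
Definition tau_minus (n m : nat) (i : 'I_n) (j : 'I_m) (x : pt n m) : pt n m :=
  ([ffun k => if k == i then x.1 k - n%:Z else x.1 k],
   [ffun l => if l == j then x.2 l - m%:Z else x.2 l]).

Definition tau_step (n m : nat) (x y : pt n m) : Prop :=
  exists (i : 'I_n) (j : 'I_m),
    (x.1 i = x.2 j /\ y = tau_plus i j x) \/
    (x.1 i - x.2 j = n%:Z - m%:Z /\ y = tau_minus i j x).

Inductive inO (n m : nat) : pt n m -> Prop :=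
  | inO_base : inO (Lambda0 n m)
  | inO_step : forall x y, inO x -> tau_step x y -> inO y.

Definition shift (n m : nat) (x : pt n m) (c : int) : pt n m :=
  ([ffun k => x.1 k + c], [ffun l => x.2 l + c]).

(** The maps [tau_alpha] commute with the diagonal shift and [tau_{-alpha}]
    undoes [tau_alpha], so [O] is a connected component of the graph of the
    maps.  Hence [O] is mapped to itself by the shift by [c] as soon as it
    contains [Lambda0 + c], and such [c] form a subgroup of [Z].
    (a) If [lambda] has a removable box at the end of row [rho], of length [c],
    and [mu] is [lambda] without it, then
    [a_{n+1-rho}(mu) = b_c(mu) = m(rho-1) + n(c-1)] and [x(lambda)] is
    [tau_alpha (x(mu))] for [alpha = eps_{n+1-rho} - delta_c]; induct on
    [|lambda|], starting from [x(empty) = Lambda0].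
    (b) The full rectangle [(m,...,m)] has [x = Lambda0 + nm]. *)

From mathcomp Require Import all_boot all_order all_algebra.
From mathcomp Require Import zify ring.
Import Order.TTheory GRing.Theory Num.Theory.
Set Implicit Arguments. Unset Strict Implicit. Unset Printing Implicit Defensive.
Local Open Scope ring_scope.

Lemma card_ord_lt (n r : nat) : (r <= n)%N -> #|[set k : 'I_n | (k < r)%N]| = r.
Proof.
elim: r => [|r IHr] le_rn.
  by apply/eqP; rewrite cards_eq0; apply/eqP/setP => k; rewrite !inE.
have -> : [set k : 'I_n | (k < r.+1)%N] = Ordinal le_rn |: [set k : 'I_n | (k < r)%N].
  by apply/setP => k; rewrite !inE ltnS leq_eqVlt -val_eqE.
by rewrite cardsU1 inE ltnn IHr ?(ltnW le_rn).
Qed.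

Lemma conjp_card_lt (n : nat) (lam : {ffun 'I_n -> nat}) (c r : nat) :
  (r <= n)%N -> (forall k : 'I_n, (c <= lam k)%N = (k < r)%N) -> conjp lam c = r.
Proof.
move=> le_rn lamE; rewrite /conjp -[RHS](card_ord_lt le_rn).
by apply: eq_card => k; rewrite !inE.
Qed.

Section Orbit.
Variables n m : nat.
Implicit Types x y : pt n m.

Lemma tau_step_sym x y : tau_step x y -> tau_step y x.
Proof.
case: x => x1 x2 [i [j [[xij ->]|[xij ->]]]]; exists i, j; [right|left]; split.
- by rewrite /= !ffunE !eqxx xij; ring.
- by congr (_, _); apply/ffunP => k; rewrite !ffunE; case: eqP; rewrite ?addrK.
- by rewrite /= !ffunE !eqxx -[x1 i](subrK (x2 j)) xij; ring.
- by congr (_, _); apply/ffunP => k; rewrite !ffunE; case: eqP; rewrite ?subrK.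
Qed.

Lemma shift_shift x c d : shift (shift x c) d = shift x (c + d).
Proof. by congr (_, _); apply/ffunP => k; rewrite !ffunE addrA. Qed.

Lemma shift0 x : shift x 0 = x.
Proof. by case: x => x1 x2; congr (_, _); apply/ffunP => k; rewrite ffunE addr0. Qed.

Lemma tau_step_shift x y c : tau_step x y -> tau_step (shift x c) (shift y c).
Proof.
case=> i [j [[xij ->]|[xij ->]]]; exists i, j; [left|right]; split.
- by rewrite /= !ffunE xij.
- by congr (_, _); apply/ffunP => k; rewrite !ffunE; case: eqP => // _; rewrite addrAC.
- by rewrite /= !ffunE -xij; ring.
- by congr (_, _); apply/ffunP => k; rewrite !ffunE; case: eqP => // _; rewrite addrAC.
Qed.

Lemma inO_shiftP x c :
  inO x -> inO (shift x c) <-> inO (shift (Lambda0 n m) c).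
Proof.
elim=> [|y z _ IHy yz]; first by [].
have shift_yz := tau_step_shift c yz.
split=> [Oz|/IHy Oy].
- by apply/IHy; apply: inO_step Oz (tau_step_sym shift_yz).
- exact: inO_step Oy shift_yz.
Qed.

Lemma inO_shiftD c d :
  inO (shift (Lambda0 n m) c) -> inO (shift (Lambda0 n m) d) ->
  inO (shift (Lambda0 n m) (c + d)).
Proof. by move=> Oc Od; rewrite -shift_shift; apply/(inO_shiftP d Oc). Qed.

Lemma inO_shiftN c :
  inO (shift (Lambda0 n m) c) -> inO (shift (Lambda0 n m) (- c)).
Proof.
move=> Oc; apply/(inO_shiftP (- c) Oc).
by rewrite shift_shift addrN shift0; apply: inO_base.
Qed.

Lemma inO_shiftMl c (k : int) :
  inO (shift (Lambda0 n m) c) -> inO (shift (Lambda0 n m) (k * c)).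
Proof.
move=> Oc; elim/int_rec: k => [|k IHk|k IHk].
- by rewrite mul0r shift0; apply: inO_base.
- by rewrite -addn1 PoszD mulrDl mul1r; apply: inO_shiftD.
- by rewrite -addn1 PoszD opprD mulrDl mulN1r; apply: inO_shiftD => //; apply: inO_shiftN.
Qed.

End Orbit.

Definition remove_box (n : nat) (lam : {ffun 'I_n -> nat}) (r : 'I_n) :
  {ffun 'I_n -> nat} :=
  [ffun k => if k == r then (lam k).-1 else lam k].

Lemma sum_remove_box (n : nat) (lam : {ffun 'I_n -> nat}) (r : 'I_n) :
  (0 < lam r)%N -> (\sum_i lam i = (\sum_i remove_box lam r i).+1)%N.
Proof.
move=> lam_r_gt0; rewrite (bigD1 r) // [in RHS](bigD1 r) //= ffunE eqxx -addSn prednK //.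
by congr (_ + _)%N; apply: eq_bigr => k /negPf neq_kr; rewrite ffunE neq_kr.
Qed.

Lemma exists_corner (n : nat) (lam : {ffun 'I_n -> nat}) (i : 'I_n) :
  (0 < lam i)%N ->
  exists r : 'I_n, (0 < lam r)%N /\ forall k : 'I_n, (r < k)%N -> (lam k < lam r)%N.
Proof.
move=> lam_i_gt0.
case: (@arg_maxnP _ i (fun k => 0 < lam k)%N (@nat_of_ord n) lam_i_gt0) => r lam_r_gt0 r_last.
exists r; split=> // k lt_rk; suff -> : lam k = 0%N by [].
by apply/eqP; rewrite -leqn0 leqNgt; apply: contraTN lt_rk => /r_last; rewrite -leqNgt.
Qed.

Section RemoveCorner.
Variables (n m : nat) (lam : {ffun 'I_n -> nat}) (r : 'I_n).
Hypotheses (lamX : inX m lam) (lam_r_gt0 : (0 < lam r)%N)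
  (lam_corner : forall k : 'I_n, (r < k)%N -> (lam k < lam r)%N).

Let mu := remove_box lam r.

Lemma leq_corner k : (lam r <= lam k)%N = (k <= r)%N.
Proof.
case: (leqP k r) => [le_kr | lt_rk]; first exact: lamX.1.
by apply/negbTE; rewrite -ltnNge; apply: lam_corner.
Qed.

Lemma conjp_corner : conjp lam (lam r) = r.+1.
Proof. by apply: conjp_card_lt => [|k]; rewrite ?ltnS ?leq_corner. Qed.

Lemma conjp_remove_box_corner : conjp mu (lam r) = r.
Proof.
apply: conjp_card_lt => [|k]; first exact: ltnW.
rewrite ffunE; case: eqP => [->|/eqP neq_kr]; first by rewrite ltnn; lia.
by rewrite leq_corner ltn_neqAle val_eqE neq_kr.
Qed.

Lemma conjp_remove_box l : l != lam r -> conjp mu l = conjp lam l.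
Proof.
move=> neq_l; apply: eq_card => k; rewrite !inE ffunE.
by case: eqP => [->|//]; move: neq_l; lia.
Qed.

Lemma inX_remove_box : inX m mu.
Proof.
case: lamX => lam_mono lam_le_m; split=> [i j le_ij|i]; rewrite !ffunE.
  case: (j =P r) => [Ejr | /eqP neq_jr]; case: (i =P r) => [Eir | _].
  - by rewrite Eir Ejr.
  - by subst j; have := lam_mono _ _ le_ij; lia.
  - by subst i; rewrite -ltnS prednK // lam_corner // ltn_neqAle val_eqE eq_sym neq_jr.
  - exact: lam_mono.
by case: eqP => _; have := lam_le_m i; lia.
Qed.

Lemma tau_step_remove_box : tau_step (xlam m mu) (xlam m lam).
Proof.
have lt_cm : ((lam r).-1 < m)%N by have := lamX.2 r; lia.
have pred_cK : (lam r).-1.+1 = lam r by lia.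
have rev_rK : (n - (rev_ord r).+1 = r)%N by rewrite /= subnSK // subKn // ltnW.
exists (rev_ord r), (Ordinal lt_cm); left; split.
  by rewrite /= !ffunE rev_ordK eqxx pred_cK conjp_remove_box_corner rev_rK addnC.
congr (_, _); apply/ffunP => k; rewrite !ffunE.
  case: eqP => [->|neq_k]; first by rewrite rev_ordK eqxx rev_rK -PoszD; congr Posz; lia.
  by rewrite (_ : (rev_ord k == r) = false) //; apply/eqP => E; apply: neq_k; rewrite -E rev_ordK.
case: eqP => [->|/eqP neq_k] /=.
  by rewrite pred_cK conjp_corner conjp_remove_box_corner -PoszD; congr Posz; lia.
by rewrite conjp_remove_box //; apply: contra neq_k => /eqP E; rewrite -val_eqE /= -E.
Qed.

End RemoveCorner.

Lemma xlam_empty (n m : nat) (lam : {ffun 'I_n -> nat}) :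
  (forall i, lam i = 0%N) -> xlam m lam = Lambda0 n m.
Proof.
move=> lam0; rewrite /xlam /Lambda0; congr (_, _); apply/ffunP => k; rewrite !ffunE.
  by rewrite lam0 muln0 addn0.
rewrite (@conjp_card_lt _ _ _ 0) ?muln0 ?addn0 // => i.
by rewrite lam0 ltn0.
Qed.

Lemma inO_xlam (n m : nat) (lam : {ffun 'I_n -> nat}) : inX m lam -> inO (xlam m lam).
Proof.
have [s] := ubnP (\sum_i lam i); elim: s lam => // s IHs lam lt_sum lamX.
have [i lam_i_gt0|lam0] := pickP (fun i => 0 < lam i)%N; last first.
  by rewrite xlam_empty => [|i]; [apply: inO_base | apply/eqP; rewrite -leqn0 leqNgt lam0].
have [r [lam_r_gt0 lam_corner]] := exists_corner lam_i_gt0.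
apply: inO_step (tau_step_remove_box lamX lam_r_gt0 lam_corner).
apply: IHs; last exact: inX_remove_box.
by move: lt_sum; rewrite (sum_remove_box lam_r_gt0).
Qed.

Lemma shift_Lambda0_rectangle (n m : nat) :
  shift (Lambda0 n m) (n%:Z * m%:Z) = xlam m [ffun _ : 'I_n => m].
Proof.
rewrite /shift /xlam /=; congr (_, _); apply/ffunP => k; rewrite !ffunE -PoszM -PoszD //.
have conj_full : conjp [ffun _ : 'I_n => m] k.+1 = n.
  by apply: conjp_card_lt => // i; rewrite ffunE !ltn_ord.
by rewrite conj_full (mulnC m).
Qed.

Theorem corollary4p4 (n m : nat) (hn : (0 < n)%N) (hnm : (n < m)%N) :
  (forall lam : {ffun 'I_n -> nat}, inX m lam -> inO (xlam m lam)) /\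
  (forall k : int, inO (shift (Lambda0 n m) (k * n%:Z * m%:Z))).
Proof.
split=> [lam|k]; first exact: inO_xlam.
rewrite -mulrA; apply: inO_shiftMl.
rewrite shift_Lambda0_rectangle; apply: inO_xlam.
by split=> [i j _|i]; rewrite !ffunE.
Qed.
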